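(* Let $(S,\circ)$ be a right loop with identity $1$, with group torsion $G_S$ and associated group $G_SS\le\mathrm{Sym}(S)$, and let $\sigma(S)$ be the stability relation on $S$. Then $N_{G_SS}(N_{G_SS}(G_S))=G_SS$ if and only if $\sigma(S)$ is a congruence on $S$ and, for all $y,z\in S$, $\{(x,\,x\,\theta^S f^S(y,z)) \mid x \in S\} \subseteq \sigma(S)$.
   Context: A right loop is a set $S$ with a binary operation $\circ$ having a two-sided identity $1$ such that for all $a,b\in S$ the equation $X\circ a=b$ has a unique solution $X\in S$. A right subloop of $S$ is a nonempty subset which is a right loop under the induced operation. A congruence on $S$ is an equivalence relation $R\subseteq S\times S$ which is a right subloop of $S\times S$ (with componentwise operation $(a,b)\circ(c,d)=(a\circ c,b\circ d)$). Products in $\mathrm{Sym}(S)$ follow the convention $(rs)(x)=s(r(x))$. For $u\in S$, $R_u\in\mathrm{Sym}(S)$ is $R_u(x)=x\circ u$, and $G_SS=\langle R_x : x\in S\rangle\le\mathrm{Sym}(S)$; $S$ is identified with $\{R_x: x\in S\}\subseteq G_SS$. For $y,z\in S$, $f^S(y,z)\in \mathrm{Sym}(S)$ is defined by: $f^S(y,z)(x)$ is the unique solution $X$ of $X\circ(y\circ z)=(x\circ y)\circ z$ (equivalently $f^S(y,z)=R_yR_zR_{y\circ z}^{-1}$). The group torsion $G_S$ is the subgroup of $\mathrm{Sym}(S)$ generated by all $f^S(y,z)$; it is a subgroup of $G_SS$. $G_S$ acts on $S$ via $x\,\theta^S h=h(x)$. $G_SS$ acts on $S$ by $x\star p=p(x)$,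 $\mathrm{stab}(G_SS,u)$ denotes the stabilizer of $u$, and the stability relation is $\sigma(S)=\{(x,y)\in S\times S \mid \mathrm{stab}(G_SS,x)=\mathrm{stab}(G_SS,y)\}$. *)

(* Permutations of S are represented as functions S -> S; all subgroup
   memberships below are extensional (stated pointwise), so no funext is
   needed.  Product convention: (r s)(x) = s (r x). *)

Section RightLoops.
Context {S : Type}.
Variable op : S -> S -> S.
Variable e : S.

Definition is_right_loop : Prop :=
  (forall a, op e a = a /\ op a e = a) /\
  (forall a b, exists X, op X a = b /\ forall Y, op Y a = b -> Y = X).

Definition right_subloop {T : Type} (opT : T -> T -> T) (P : T -> Prop) : Prop :=
  (exists t, P t) /\
  (forall a b, P a -> P b -> P (opT a b)) /\
  (exists u, P u /\ forall a, P a -> opT u a = a /\ opT a u = a) /\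
  (forall a b, P a -> P b ->
     exists X, (P X /\ opT X a = b) /\ forall Y, P Y -> opT Y a = b -> Y = X).

Definition pair_op (p q : S * S) : S * S := (op (fst p) (fst q), op (snd p) (snd q)).

Definition is_equivalence (R : S -> S -> Prop) : Prop :=
  (forall x, R x x) /\ (forall x y, R x y -> R y x) /\
  (forall x y z, R x y -> R y z -> R x z).

Definition congruence (R : S -> S -> Prop) : Prop :=
  is_equivalence R /\ right_subloop pair_op (fun p => R (fst p) (snd p)).

(* Subgroup of Sym(S) generated by a set X of permutations:
   words p1^{+-1} ... pn^{+-1}.  r = p q : r x = q (p x);
   r = p^{-1} q : r (p x) = q x. *)
Inductive gen (X : (S -> S) -> Prop) : (S -> S) -> Prop :=
| gen_id r : (forall x, r x = x) -> gen X r
| gen_mul p q r : X p -> gen X q -> (forall x, r x = q (p x)) -> gen X r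
| gen_inv p q r : X p -> gen X q -> (forall x, r (p x) = q x) -> gen X r.

Definition Rmul (u : S) : S -> S := fun x => op x u.

Definition is_fS (y z : S) (h : S -> S) : Prop :=
  forall x, op (h x) (op y z) = op (op x y) z.

Definition GSS : (S -> S) -> Prop :=
  gen (fun p => exists u, forall x, p x = Rmul u x).

Definition GS : (S -> S) -> Prop :=
  gen (fun h => exists y z, is_fS y z h).

(* N_G(H) = { g in G | g H g^{-1} = H }, where g h g^{-1} is x |-> g^{-1}(h(g x)) *)
Definition normalizer (G H : (S -> S) -> Prop) (g : S -> S) : Prop :=
  G g /\
  (forall h, H h -> exists h', H h' /\ forall x, h (g x) = g (h' x)) /\
  (forall h', H h' -> exists h, H h /\ forall x, h (g x) = g (h' x)).

Definition stab (u : S) (p : S -> S) : Prop := GSS p /\ p u = u.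

Definition sigma (x y : S) : Prop := forall p, stab x p <-> stab y p.

End RightLoops.

From Stdlib Require Import ClassicalEpsilon.

(* Every g in G_SS has the form g(x) = h(x) c with h in G_S and c = g(1), and G_S
   fixes 1; hence G_S = stab(G_SS, 1), and the normalizer N of G_S in G_SS consists
   of the g with g(1) sigma 1.  Both sides of the equivalence then say that every n
   in N satisfies n(x) sigma x for all x.  For N(N) = G_SS this is read off at the
   point 1 after conjugating n by R_x.  On the congruence side, n(x) = h(x) c with
   h(x) sigma x and c sigma 1, so n(x) sigma x 1 = x; conversely the elements
   w |-> (w b)/b' of N, together with R_a and R_a^-1, make sigma compatible with
   products and right divisions on both sides. *)

Section Generated.
Context {T : Type} (X : (T -> T) -> Prop).

Lemma gen_ext r r' : gen X r -> (forall x, r' x = r x) -> gen X r'.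
Proof.
  intros [r0 E | p q r0 Xp Gq E | p q r0 Xp Gq E] Er'.
  - apply gen_id. intro x. rewrite Er'. apply E.
  - apply (gen_mul _ p q); auto. intro x. rewrite Er'. apply E.
  - apply (gen_inv _ p q); auto. intro x. rewrite Er'. apply E.
Qed.

Lemma gen_comp a b : gen X a -> gen X b -> gen X (fun x => b (a x)).
Proof.
  intros Ga Gb. induction Ga as [a E | p q a Xp Gq IH E | p q a Xp Gq IH E].
  - apply (gen_ext b); auto. intro x. rewrite E. reflexivity.
  - apply (gen_mul _ p (fun x => b (q x))); auto. intro x. rewrite E. reflexivity.
  - apply (gen_inv _ p (fun x => b (q x))); auto. intro x. rewrite E. reflexivity.
Qed.

Lemma gen_conj g gi p : gen X g -> gen X gi -> gen X p -> gen X (fun w => gi (p (g w))).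
Proof. intros Gg Ggi Gp. apply (gen_comp (fun w => p (g w))); [apply gen_comp |]; assumption. Qed.

Lemma gen_generator p : X p -> gen X p.
Proof. intro Xp. apply (gen_mul _ p (fun x => x)); auto. now apply gen_id. Qed.

Lemma gen_inverse :
  (forall p, X p -> exists pinv, (forall x, pinv (p x) = x) /\ (forall x, p (pinv x) = x)) ->
  forall a, gen X a ->
  exists ainv, gen X ainv /\ (forall x, ainv (a x) = x) /\ (forall x, a (ainv x) = x).
Proof.
  intros Xinv a Ga. induction Ga as [a E | p q a Xp Gq IH E | p q a Xp Gq IH E].
  - exists (fun x => x). split; [now apply gen_id | split; intro x; now rewrite E].
  - destruct IH as [qi [Gqi [Eq1 Eq2]]], (Xinv p Xp) as [pi [Ep1 Ep2]].
    exists (fun x => pi (qi x)). split; [| split; intro x; rewrite ?E].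
    + apply gen_comp; auto. apply (gen_inv _ p (fun x => x)); auto. now apply gen_id.
    + now rewrite Eq1, Ep1.
    + now rewrite Ep2, Eq2.
  - destruct IH as [qi [Gqi [Eq1 Eq2]]], (Xinv p Xp) as [pi [Ep1 Ep2]].
    assert (Ea : forall x, a x = q (pi x)) by (intro x; now rewrite <- E, Ep2).
    exists (fun x => p (qi x)). split; [| split; intro x].
    + apply gen_comp; auto. now apply gen_generator.
    + now rewrite Ea, Eq1, Ep2.
    + now rewrite E, Eq2.
Qed.

End Generated.

Lemma gen_sub {T : Type} (X Y : (T -> T) -> Prop) :
  (forall p, X p -> gen Y p /\ exists pinv, gen Y pinv /\ forall x, p (pinv x) = x) ->
  forall a, gen X a -> gen Y a.
Proof.
  intros XY a Ga. induction Ga as [a E | p q a Xp Gq IH E | p q a Xp Gq IH E].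
  - now apply gen_id.
  - destruct (XY p Xp) as [Gp _]. apply (gen_ext _ _ _ (gen_comp _ _ _ Gp IH)).
    intro x. now rewrite E.
  - destruct (XY p Xp) as [_ [pi [Gpi Epi]]].
    apply (gen_ext _ _ _ (gen_comp _ _ _ Gpi IH)).
    intro x. simpl. now rewrite <- E, Epi.
Qed.

Section RightLoop.
Variables (S : Type) (op : S -> S -> S) (e : S).
Hypothesis HS : is_right_loop op e.

Lemma op_e_l a : op e a = a.
Proof. apply (proj1 (proj1 HS a)). Qed.

Lemma op_e_r a : op a e = a.
Proof. apply (proj2 (proj1 HS a)). Qed.

Definition rdiv (b a : S) : S :=
  proj1_sig (constructive_indefinite_description _ (proj2 HS a b)).

Lemma rdivK b a : op (rdiv b a) a = b.
Proof. unfold rdiv. destruct (constructive_indefinite_description _ _) as [X [E U]]; exact E. Qed.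

Lemma rdiv_unique b a X : op X a = b -> X = rdiv b a.
Proof.
  intro E. unfold rdiv. destruct (constructive_indefinite_description _ _) as [Y [EY U]]. exact (U X E).
Qed.

Lemma opK b a : rdiv (op b a) a = b.
Proof. symmetry. now apply rdiv_unique. Qed.

Lemma rdiv_id a : rdiv a a = e.
Proof. symmetry. apply rdiv_unique, op_e_l. Qed.

Lemma op_inj_l a X Y : op X a = op Y a -> X = Y.
Proof. intro E. now rewrite <- (opK X a), E, opK. Qed.

Definition fS (y z : S) : S -> S := fun x => rdiv (op (op x y) z) (op y z).

Definition fSinv (y z : S) : S -> S := fun x => rdiv (rdiv (op x (op y z)) z) y.

Lemma fS_spec y z : is_fS op y z (fS y z).
Proof. intro x. apply rdivK. Qed.

Section Torsion.
Variables (y z : S) (h : S -> S).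
Hypothesis Hh : is_fS op y z h.

Lemma fSinvK x : fSinv y z (h x) = x.
Proof. unfold fSinv. now rewrite Hh, !opK. Qed.

Lemma fSinvKV x : h (fSinv y z x) = x.
Proof. apply (op_inj_l (op y z)). now rewrite Hh; unfold fSinv; rewrite !rdivK. Qed.

Lemma is_fS_e : h e = e.
Proof. apply (op_inj_l (op y z)). now rewrite Hh, !op_e_l. Qed.

End Torsion.

Lemma fS_GS y z : GS op (fS y z).
Proof. apply gen_generator. exists y, z. apply fS_spec. Qed.

Lemma fSinv_GS y z : GS op (fSinv y z).
Proof.
  apply (gen_inv _ (fS y z) (fun x => x)); [exists y, z; apply fS_spec | now apply gen_id |].
  intro x. apply (fSinvK _ _ _ (fS_spec y z)).
Qed.

Lemma Rmul_GSS u : GSS op (Rmul op u).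
Proof. apply gen_generator. now exists u. Qed.

Lemma Rdiv_GSS u : GSS op (fun x => rdiv x u).
Proof.
  apply (gen_inv _ (Rmul op u) (fun x => x)); [now exists u | now apply gen_id |].
  intro x. apply opK.
Qed.

Lemma GSS_inverse g : GSS op g ->
  exists gi, GSS op gi /\ (forall x, gi (g x) = x) /\ (forall x, g (gi x) = x).
Proof.
  apply gen_inverse. intros p [u Ep]. exists (fun x => rdiv x u).
  split; intro x; rewrite Ep; [apply opK | apply rdivK].
Qed.

Lemma GS_inverse h : GS op h ->
  exists hi, GS op hi /\ (forall x, hi (h x) = x) /\ (forall x, h (hi x) = x).
Proof.
  apply gen_inverse. intros p [y [z Hp]]. exists (fSinv y z).
  split; [apply (fSinvK _ _ _ Hp) | apply (fSinvKV _ _ _ Hp)].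
Qed.

Lemma GS_GSS h : GS op h -> GSS op h.
Proof.
  apply gen_sub. intros p [y [z Hp]]. split.
  - apply (gen_ext _ (fun x => rdiv (op (op x y) z) (op y z))).
    + apply (gen_comp _ (fun x => op (op x y) z) (fun w => rdiv w (op y z))), Rdiv_GSS.
      apply (gen_comp _ (Rmul op y) (Rmul op z)); apply Rmul_GSS.
    + intro x. apply (op_inj_l (op y z)). now rewrite Hp, rdivK.
  - exists (fSinv y z). split; [| apply (fSinvKV _ _ _ Hp)].
    apply (gen_comp _ (fun x => rdiv (op x (op y z)) z) (fun w => rdiv w y)), Rdiv_GSS.
    apply (gen_comp _ (Rmul op (op y z)) (fun w => rdiv w z)); [apply Rmul_GSS | apply Rdiv_GSS].
Qed.

Lemma GS_e h : GS op h -> h e = e.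
Proof.
  intro Gh. induction Gh as [h E | p q h [y [z Hp]] Gq IH E | p q h [y [z Hp]] Gq IH E].
  - apply E.
  - now rewrite E, (is_fS_e _ _ _ Hp).
  - now rewrite <- (is_fS_e _ _ _ Hp) at 1; rewrite E.
Qed.

(* Both sides of the identity, multiplied on the right by y z, equal ((x a) y) z. *)
Lemma is_fS_Rmul_exchange y z p : is_fS op y z p ->
  forall a, exists p', GS op p' /\ forall x, p (op x a) = op (p' x) (p a).
Proof.
  intros Hp a.
  exists (fun x => fSinv (p a) (op y z) (fS (op a y) z (fS a y x))). split.
  - apply gen_comp; [apply gen_comp |]; apply fS_GS || apply fSinv_GS.
  - intro x. apply (op_inj_l (op y z)).
    rewrite Hp, <- (fS_spec (p a) (op y z)), (fSinvKV _ _ _ (fS_spec _ _)).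
    now rewrite Hp, fS_spec, fS_spec.
Qed.

Lemma GS_Rmul_exchange h : GS op h ->
  forall a, exists h', GS op h' /\ forall x, h (op x a) = op (h' x) (h a).
Proof.
  intro Gh. induction Gh as [h E | p q h [y [z Hp]] Gq IH E | p q h [y [z Hp]] Gq IH E]; intro a.
  - exists (fun x => x). split; [now apply gen_id | intro x; now rewrite !E].
  - destruct (is_fS_Rmul_exchange y z p Hp a) as [p' [Gp' Ep']].
    destruct (IH (p a)) as [q' [Gq' Eq']].
    exists (fun x => q' (p' x)). split; [now apply gen_comp |].
    intro x. now rewrite !E, Ep', Eq'.
  - pose (b := fSinv y z a).
    assert (Eb : p b = a) by apply (fSinvKV _ _ _ Hp).
    destruct (is_fS_Rmul_exchange y z p Hp b) as [p' [Gp' Ep']].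
    destruct (GS_inverse p' Gp') as [pi [Gpi [_ Epi]]].
    destruct (IH b) as [q' [Gq' Eq']].
    exists (fun x => q' (pi x)). split; [now apply gen_comp |].
    intro x.
    assert (Ex : op x a = p (op (pi x) b)) by now rewrite Ep', Epi, Eb.
    now rewrite Ex, E, Eq', <- Eb, E.
Qed.

Lemma GSS_decomp g : GSS op g -> exists h c, GS op h /\ forall x, g x = op (h x) c.
Proof.
  intro Gg. induction Gg as [g E | p q g [a Ep] Gq IH E | p q g [a Ep] Gq IH E].
  - exists (fun x => x), e. split; [now apply gen_id | intro x; now rewrite E, op_e_r].
  - destruct IH as [h [c [Gh Eh]]], (GS_Rmul_exchange h Gh a) as [h' [Gh' Eh']].
    exists (fun x => fS (h a) c (h' x)), (op (h a) c). split; [apply gen_comp; auto; apply fS_GS |].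
    intro x. rewrite E, Ep, Eh. unfold Rmul. now rewrite Eh', fS_spec.
  - destruct IH as [h [c [Gh Eh]]].
    (* with b = 1/a, (w b) a = f(b,a)(w) (b a) = f(b,a)(w), so R_a^-1 = f(b,a)^-1 R_b *)
    pose (b := rdiv e a).
    destruct (GS_Rmul_exchange h Gh b) as [h' [Gh' Eh']].
    exists (fun x => fS (h b) c (h' (fSinv b a x))), (op (h b) c). split.
    + apply gen_comp; [apply gen_comp; auto; apply fSinv_GS | apply fS_GS].
    + intro x.
      assert (Ex : x = p (op (fSinv b a x) b)).
      { rewrite Ep. unfold Rmul. rewrite <- (fS_spec b a), (fSinvKV _ _ _ (fS_spec _ _)).
        unfold b. now rewrite rdivK, op_e_r. }
      rewrite Ex at 1. now rewrite E, Eh, Eh', fS_spec.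
Qed.

Lemma stab_e_GS p : stab op e p <-> GS op p.
Proof.
  split; [intros [Gp Ep] | intro Gp; split; [now apply GS_GSS | now apply GS_e]].
  destruct (GSS_decomp p Gp) as [h [c [Gh Eh]]].
  assert (Ec : c = e) by now rewrite Eh, GS_e, op_e_l in Ep.
  apply (gen_ext _ h); auto. intro x. now rewrite Eh, Ec, op_e_r.
Qed.

Lemma sigma_refl x : sigma op x x.
Proof. intro p. tauto. Qed.

Lemma sigma_sym x y : sigma op x y -> sigma op y x.
Proof. intros Hxy p. specialize (Hxy p). tauto. Qed.

Lemma sigma_trans x y z : sigma op x y -> sigma op y z -> sigma op x z.
Proof. intros Hxy Hyz p. specialize (Hxy p). specialize (Hyz p). tauto. Qed.

Lemma sigma_equivalence : is_equivalence (sigma op).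
Proof. split; [exact sigma_refl | split; [exact sigma_sym | exact sigma_trans]]. Qed.

Section Conjugation.
Variables g gi : S -> S.
Hypotheses (Gg : GSS op g) (Ggi : GSS op gi).
Hypotheses (gK : forall x, gi (g x) = x) (gKV : forall x, g (gi x) = x).

Lemma stab_conj u p : stab op u (fun w => gi (p (g w))) <-> stab op (g u) p.
Proof.
  split; intros [Gp Ep]; split.
  - apply (gen_ext _ (fun w => g (gi (p (g (gi w)))))); [exact (gen_conj _ gi g _ Ggi Gg Gp) |].
    intro x. now rewrite !gKV.
  - now rewrite <- (gKV (p (g u))), Ep.
  - now apply gen_conj.
  - now rewrite Ep, gK.
Qed.

Lemma sigma_conj x y : sigma op x y -> sigma op (g x) (g y).
Proof. intros Hxy p. rewrite <- !stab_conj. apply Hxy. Qed.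

Lemma conj_GS h : sigma op (g e) e -> GS op h -> GS op (fun w => gi (h (g w))).
Proof. intros Sg Gh. apply stab_e_GS, stab_conj, Sg, stab_e_GS, Gh. Qed.

Lemma normalizer_intro (H : (S -> S) -> Prop) :
  (forall h, H h -> H (fun w => gi (h (g w)))) ->
  (forall h, H h -> H (fun w => g (h (gi w)))) ->
  normalizer (GSS op) H g.
Proof.
  intros Hg Hgi. split; [exact Gg | split].
  - intros h Hh. exists (fun w => gi (h (g w))). split; [auto | intro x; now rewrite gKV].
  - intros h' Hh'. exists (fun w => g (h' (gi w))). split; [auto | intro x; now rewrite gK].
Qed.

End Conjugation.

Lemma sigma_GSS g x y : GSS op g -> sigma op x y -> sigma op (g x) (g y).
Proof.
  intro Gg. destruct (GSS_inverse g Gg) as [gi [Ggi [gK gKV]]].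
  exact (sigma_conj g gi Gg Ggi gK gKV x y).
Qed.

Lemma sigma_op_r a a' b : sigma op a a' -> sigma op (op a b) (op a' b).
Proof. apply (sigma_GSS (Rmul op b)), Rmul_GSS. Qed.

Lemma sigma_rdiv_r a b b' : sigma op b b' -> sigma op (rdiv b a) (rdiv b' a).
Proof. apply (sigma_GSS (fun x => rdiv x a)), Rdiv_GSS. Qed.

Lemma normalizer_GS_sigma g : normalizer (GSS op) (GS op) g -> sigma op (g e) e.
Proof.
  intros [Gg [Nl Nr]] p. destruct (GSS_inverse g Gg) as [gi [Ggi [gK gKV]]].
  split; intro Sp.
  - apply (stab_conj g gi Gg Ggi gK gKV), stab_e_GS, Nr in Sp.
    destruct Sp as [h [Gh Eh]].
    assert (Ehp : forall x, h x = p x) by (intro x; now rewrite <- (gKV x), Eh, gKV).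
    split; [now apply GS_GSS, (gen_ext _ h) | now rewrite <- Ehp, GS_e].
  - destruct Sp as [Gp Ep].
    destruct (Nl p (proj1 (stab_e_GS p) (conj Gp Ep))) as [h [Gh Eh]].
    split; [exact Gp | now rewrite Eh, GS_e].
Qed.

Lemma sigma_normalizer_GS g : GSS op g -> sigma op (g e) e -> normalizer (GSS op) (GS op) g.
Proof.
  intros Gg Sg. destruct (GSS_inverse g Gg) as [gi [Ggi [gK gKV]]].
  assert (Sgi : sigma op (gi e) e) by (rewrite <- (gK e) at 2; now apply sigma_GSS, sigma_sym).
  apply (normalizer_intro g gi Gg gK gKV); intros h Gh.
  - now apply (conj_GS g gi).
  - now apply (conj_GS gi g).
Qed.

Lemma normalizer_GS_iff g :
  normalizer (GSS op) (GS op) g <-> GSS op g /\ sigma op (g e) e.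
Proof.
  split; [intro Ng; split; [apply Ng | now apply normalizer_GS_sigma] |].
  intros [Gg Sg]. now apply sigma_normalizer_GS.
Qed.

Definition normalizer_fixes_sigma_classes : Prop :=
  forall n, normalizer (GSS op) (GS op) n -> forall x, sigma op (n x) x.

Section FixedClasses.
Hypothesis K : normalizer_fixes_sigma_classes.

Lemma conj_normalizer_GS g gi h : GSS op g -> GSS op gi -> (forall x, gi (g x) = x) ->
  normalizer (GSS op) (GS op) h -> normalizer (GSS op) (GS op) (fun w => gi (h (g w))).
Proof.
  intros Gg Ggi gK Nh. apply normalizer_GS_iff.
  split; [apply gen_conj; auto; apply Nh |].
  rewrite <- (gK e) at 2. now apply sigma_GSS, K.
Qed.

(* w |-> (w b) / b' lies in N(G_S) when b sigma b', since it sends 1 to b / b' sigma b' / b' = 1 *)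
Lemma sigma_op_l x b b' : sigma op b b' -> sigma op (op x b) (op x b').
Proof.
  intro Sb. pose (n := fun w => rdiv (op w b) b').
  assert (Nn : normalizer (GSS op) (GS op) n).
  { apply normalizer_GS_iff. split; [exact (gen_comp _ _ _ (Rmul_GSS b) (Rdiv_GSS b')) |].
    unfold n. rewrite op_e_l, <- (rdiv_id b'). now apply sigma_rdiv_r. }
  pose proof (sigma_op_r _ _ b' (K n Nn x)) as Sx. unfold n in Sx. now rewrite rdivK in Sx.
Qed.

Lemma sigma_rdiv_l x a a' : sigma op a a' -> sigma op (rdiv x a) (rdiv x a').
Proof.
  intro Sa. pose proof (sigma_rdiv_r a' _ _ (sigma_op_l (rdiv x a) a a' Sa)) as Sx.
  rewrite rdivK, opK in Sx. now apply sigma_sym.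
Qed.

End FixedClasses.

Lemma normalizer_normalizer_iff :
  (forall g, normalizer (GSS op) (normalizer (GSS op) (GS op)) g <-> GSS op g) <->
  normalizer_fixes_sigma_classes.
Proof.
  split.
  - intros NN n Nn x.
    destruct (proj2 (NN (Rmul op x)) (Rmul_GSS x)) as [_ [Nl _]].
    destruct (Nl n Nn) as [n' [Nn' En']].
    pose proof (En' e) as Ex. unfold Rmul in Ex. rewrite op_e_l in Ex. rewrite Ex.
    rewrite <- (op_e_l x) at 2. now apply sigma_op_r, normalizer_GS_sigma.
  - intros K g. split; [now intros [Gg _] |]. intro Gg.
    destruct (GSS_inverse g Gg) as [gi [Ggi [gK gKV]]].
    apply (normalizer_intro g gi Gg gK gKV); intros h Nh; now apply conj_normalizer_GS.
Qed.

Lemma congruence_of_compatible (R : S -> S -> Prop) : is_equivalence R ->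
  (forall a a' b b', R a a' -> R b b' -> R (op a b) (op a' b')) ->
  (forall a a' b b', R a a' -> R b b' -> R (rdiv b a) (rdiv b' a')) ->
  congruence op R.
Proof.
  intros Req Rop Rdiv. split; [exact Req |].
  destruct Req as [Rrefl _].
  split; [now exists (e, e) |]. split; [intros [a a'] [b b']; apply Rop |].
  split.
  - exists (e, e). split; [apply Rrefl |]. intros [a a'] _.
    unfold pair_op; simpl. now rewrite !op_e_l, !op_e_r.
  - intros [a a'] [b b'] Ra Rb. exists (rdiv b a, rdiv b' a'). split.
    + split; [now apply Rdiv | unfold pair_op; simpl; now rewrite !rdivK].
    + intros [X X'] _ EX. unfold pair_op in EX; simpl in EX. injection EX as E E'.
      now rewrite (rdiv_unique _ _ _ E), (rdiv_unique _ _ _ E').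
Qed.

Lemma congruence_op (R : S -> S -> Prop) a a' b b' :
  congruence op R -> R a a' -> R b b' -> R (op a b) (op a' b').
Proof. intros [_ [_ [Rop _]]] Ra Rb. exact (Rop (a, a') (b, b') Ra Rb). Qed.

Lemma fS_sigma_GS :
  (forall y z h, is_fS op y z h -> forall x, sigma op x (h x)) ->
  forall h, GS op h -> forall x, sigma op x (h x).
Proof.
  intros Hf h Gh. induction Gh as [h E | p q h [y [z Hp]] Gq IH E | p q h [y [z Hp]] Gq IH E]; intro x.
  - rewrite E. apply sigma_refl.
  - rewrite E. apply (sigma_trans _ (p x)); [now apply (Hf y z) | apply IH].
  - rewrite <- (fSinvKV _ _ _ Hp x), E.
    apply (sigma_trans _ (fSinv y z x)); [apply sigma_sym, (Hf y z p Hp) | apply IH].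
Qed.

Lemma congruence_iff :
  congruence op (sigma op) /\ (forall y z h, is_fS op y z h -> forall x, sigma op x (h x)) <->
  normalizer_fixes_sigma_classes.
Proof.
  split.
  - intros [Cs Hf] n Nn x. apply normalizer_GS_iff in Nn. destruct Nn as [Gn Sn].
    destruct (GSS_decomp n Gn) as [h [c [Gh Eh]]].
    assert (Ec : n e = c) by now rewrite Eh, GS_e, op_e_l.
    assert (Sx : sigma op (op (h x) c) (op x e)).
    { apply (congruence_op _ _ _ _ _ Cs); [apply sigma_sym, fS_sigma_GS; auto | now rewrite <- Ec]. }
    rewrite op_e_r in Sx. now rewrite Eh.
  - intro K. split.
    + apply congruence_of_compatible; [exact sigma_equivalence | |]; intros a a' b b' Sa Sb.
      * apply (sigma_trans _ (op a' b)); [now apply sigma_op_r | now apply sigma_op_l].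
      * apply (sigma_trans _ (rdiv b a')); [now apply sigma_rdiv_l | now apply sigma_rdiv_r].
    + intros y z h Hh x. apply sigma_sym, K, normalizer_GS_iff.
      split; [apply GS_GSS, gen_generator; now exists y, z |].
      rewrite (is_fS_e _ _ _ Hh). apply sigma_refl.
Qed.

End RightLoop.

Theorem mainTheorem2 (S : Type) (op : S -> S -> S) (e : S)
  (HS : is_right_loop op e) :
  (forall g, normalizer (GSS op) (normalizer (GSS op) (GS op)) g <-> GSS op g)
  <->
  (congruence op (sigma op) /\
   forall y z h, is_fS op y z h -> forall x, sigma op x (h x)).
Proof.
  rewrite (normalizer_normalizer_iff S op e HS).
  symmetry. apply (congruence_iff S op e HS).
Qed.
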